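(* Let $L \geq 1$ and $1 \leq n < L$, and suppose $p_k>0$ and $q_k>0$ for all $1\le k\le n$. Then the continuous-time Markov chain on $\Omega_{L,n}$ described in the context is irreducible; equivalently, the chain on $\mathcal{A}_{L,n}$ is irreducible.
   Context: Particle labels $k$ are taken modulo $n$ (in $\{1,\dots,n\}$), positions modulo $L$. $\Omega_{L,n}$ is the set of words $w_1\cdots w_L$ on the ring $\mathbb{Z}/L\mathbb{Z}$ over the alphabet $\{\bullet_1,\dots,\bullet_n,\Box_1,\dots,\Box_n\}$ in which each $\bullet_k$ occurs exactly once, the letters $\bullet_1,\dots,\bullet_n$ appear in this cyclic order around the ring, and the remaining $L-n$ letters are arbitrary $\Box_i$'s. The chain has transitions (displayed segments are consecutive positions on the ring, the rest unchanged, $C$ a possibly empty word in the $\Box$-letters only): (T1) $\bullet_k\Box_i \to \Box_i\bullet_k$ at rate $p_k$, if $i\neq k$; (T2) $\bullet_{k-1}\,C\,\bullet_k\Box_k \to \bullet_{k-1}\Box_{k-1}\,C\,\bullet_k$ at rate $p_k$; (T3) $\Box_i\bullet_k \to \bullet_k\Box_i$ at rate $q_k$, if $i\neq k$; (T4) $\Box_k\bullet_k\,C\,\bullet_{k+1} \to \bullet_k\,C\,\Box_{k+1}\bullet_{k+1}$ at rate $q_k$. $\mathcal{A}_{L,n}$ is the set of arrays with $n$ rows (indexed mod $n$) and $L$ columns (indexed mod $L$) with entries in $\{\cdot,\bullet,\Box\}$, exactly one $\bullet$ per row, exactly one non-$\cdot$ entry per column, and the columns of the $\bullet$'s in rows $1,\dots,n$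 cyclically increasing; it is identified with $\Omega_{L,n}$ by letting $w_j=\bullet_k$ (resp. $\Box_k$) when the particle in column $j$ is a $\bullet$ (resp. $\Box$) in row $k$, and carries the transported dynamics. *)

From mathcomp Require Import all_boot all_order all_algebra.
Set Implicit Arguments. Unset Strict Implicit. Unset Printing Implicit Defensive.
Import GRing.Theory Num.Theory.

(* Letters: (true, k) = bullet_k, (false, k) = box_k.  Labels are shifted:
   the paper's label k in {1..n} is our k-1 in {0..n-1}.  Positions on the
   ring Z/LZ are natural numbers read modulo L = size w. *)
Definition letter := (bool * nat)%type.
Definition bul (k : nat) : letter := (true, k).
Definition box (k : nat) : letter := (false, k).

Definition at_ (w : seq letter) (j : nat) : letter := nth (false, 0%N) w (j %% size w).

Definition predl (n k : nat) : nat := (k + n.-1) %% n.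
Definition succl (n k : nat) : nat := k.+1 %% n.

Definition bullet_labels (w : seq letter) : seq nat := [seq x.2 | x <- w & x.1].

Definition Omega (L n : nat) (w : seq letter) : bool :=
  [&& size w == L,
      all (fun x => x.2 < n) w,
      all (fun k => count_mem (bul k) w == 1) (iota 0 n) &
      [exists r : 'I_n.+1, bullet_labels w == rot r (iota 0 n)]].

Definition off (L x m : nat) : nat := (m %% L + L - x %% L) %% L.
(* positive distance from x forward to y, in {1..L} (equal to L iff x = y mod L) *)
Definition distp (L x y : nat) : nat := ((y %% L + L - x %% L).-1 %% L).+1.
Definition inside (L x y m : nat) : bool := (0 < off L x m) && (off L x m < distp L x y).

Definition swap_at (w : seq letter) (j : nat) : seq letter :=
  let L := size w in
  mkseq (fun m => if m == j %% L then at_ w j.+1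
                  else if m == j.+1 %% L then at_ w j else at_ w m) L.

(* (T1) bullet_k box_i -> box_i bullet_k, i <> k, bullet_k at position j *)
Definition T1 (w : seq letter) (k j : nat) : option (seq letter) :=
  if [&& at_ w j == bul k, ~~ (at_ w j.+1).1 & (at_ w j.+1).2 != k]
  then Some (swap_at w j) else None.

(* (T3) box_i bullet_k -> bullet_k box_i, i <> k, box_i at position j *)
Definition T3 (w : seq letter) (k j : nat) : option (seq letter) :=
  if [&& ~~ (at_ w j).1, (at_ w j).2 != k & at_ w j.+1 == bul k]
  then Some (swap_at w j) else None.

(* (T2) bullet_{k-1} C bullet_k box_k -> bullet_{k-1} box_{k-1} C bullet_k,
   bullet_k at position b, bullet_{k-1} at position a:
   new letter at b+1 is bullet_k, at a+1 is box_{k-1}, the block strictly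
   between a+1 and b+1 is the old block shifted by one step forward. *)
Definition T2 (n : nat) (w : seq letter) (k b : nat) : option (seq letter) :=
  let L := size w in
  if (at_ w b == bul k) && (at_ w b.+1 == box k) then
    let a := index (bul (predl n k)) w in
    Some (mkseq (fun m =>
      if m == b.+1 %% L then bul k
      else if m == a.+1 %% L then box (predl n k)
      else if inside L a.+1 b.+1 m then at_ w (m + L).-1
      else at_ w m) L)
  else None.

(* (T4) box_k bullet_k C bullet_{k+1} -> bullet_k C box_{k+1} bullet_{k+1},
   box_k at position x, bullet_{k+1} at position c, y = c - 1:
   new letter at x is bullet_k, at y is box_{k+1}, the block strictly between
   x and y is the old block shifted by one step backward. *)
Definition T4 (n : nat) (w : seq letter) (k x : nat) : option (seq letter) :=
  let L := size w in
  if (at_ w x == box k) && (at_ w x.+1 == bul k) then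
    let c := index (bul (succl n k)) w in
    let y := (c + L).-1 in
    Some (mkseq (fun m =>
      if m == x %% L then bul k
      else if m == y %% L then box (succl n k)
      else if inside L x y m then at_ w m.+1
      else at_ w m) L)
  else None.

Definition rate (R : numDomainType) (p q : nat -> R) (n : nat)
    (w w' : seq letter) : R :=
  (\sum_(k < n) \sum_(j < size w)
     (p k *+ (T1 w k j == Some w') + p k *+ (T2 n w k j == Some w')
      + q k *+ (T3 w k j == Some w') + q k *+ (T4 n w k j == Some w')))%R.

Definition ctmc_irreducible (R : numDomainType) (L n : nat) (p q : nat -> R) : Prop :=
  forall x y, Omega L n x -> Omega L n y ->
    exists s : seq (seq letter),
      [&& path (fun a b => (0 < rate p q n a b)%R) x s,
          all (Omega L n) s & last x s == y].

From mathcomp Require Import all_boot all_order all_algebra.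
From mathcomp Require Import zify.
From Stdlib Require Import FunctionalExtensionality.
Import Order.TTheory GRing.Theory Num.Theory.
Set Implicit Arguments. Unset Strict Implicit. Unset Printing Implicit Defensive.

(* A configuration is a rotation of the word
     bullet_0 gap_0 bullet_1 gap_1 ... bullet_(n-1) gap_(n-1),
   where gap_i lists the labels of the boxes following bullet_i.  The last box of gap
   k-1 can cross bullet k: by T3 if its label is not k (it lands at the front of gap k,
   T1 moves it back), by T4 if its label is k (it becomes box_(k+1) at the end of gap k;
   pushing it on once around the ring undoes this up to rotation).  With these moves,
   reversible up to rotation, every configuration is sorted into the canonical one in
   which all L-n boxes are labelled n-1 and sit in gap n-2.  Pushing one of its boxes
   around the ring (a single T4 move if n = 1) rotates the canonical configuration by one
   position, so all its rotations, and hence all configurations, communicate. *)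

Lemma modnSml m d : (m %% d).+1 %% d = m.+1 %% d.
Proof. by rewrite -addn1 modnDml addn1. Qed.

Lemma eqn_modS m i d : m < d -> (m.+1 %% d == i.+1 %% d) = (m == i %% d).
Proof. by move=> md; have := eqn_modDr 1 m i d; rewrite !addn1 => ->; rewrite modn_small. Qed.

Lemma addn_sub_modn a c d : 0 < d -> a + c + d - a %% d = c %[mod d].
Proof.
move=> d0; rewrite {1}(divn_eq a d) (_ : _ - _ = a %/ d * d + c + d); last first.
  by have := ltn_pmod a d0; lia.
by rewrite modnDr modnMDl.
Qed.

Lemma addn_subn_modn a c d : 0 < d -> a + (c + d - a %% d) = c %[mod d].
Proof.
by move=> d0; rewrite addnBA ?addnA ?addn_sub_modn //; have := ltn_pmod a d0; lia.
Qed.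

Lemma eq_in_mkseq (T : Type) (f g : nat -> T) n :
  {in gtn n, f =1 g} -> mkseq f n = mkseq g n.
Proof.
by move=> fg; apply/eq_in_map => m; rewrite mem_iota add0n => /andP[_ /fg].
Qed.

Lemma nth_rot (T : Type) (x0 : T) (s : seq T) k i : k <= size s -> i < size s ->
  nth x0 (rot k s) i = nth x0 s ((k + i) %% size s).
Proof.
move=> ks iS; rewrite /rot nth_cat size_drop; case: ltnP => h.
  by rewrite nth_drop modn_small //; lia.
rewrite nth_take; last by lia.
have -> : (k + i) %% size s = k + i - size s.
  by rewrite -[in LHS](subnK (_ : size s <= k + i)) ?modnDr ?modn_small //; lia.
by congr nth; lia.
Qed.

Lemma rot1_mkseq (T : Type) (f : nat -> T) n : 0 < n ->
  rot 1 (mkseq f n) = mkseq (fun m => f (m.+1 %% n)) n.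
Proof.
move=> n0; apply: (@eq_from_nth _ (f 0)); first by rewrite size_rot !size_mkseq.
move=> i; rewrite size_rot size_mkseq => iL.
by rewrite nth_rot ?size_mkseq // add1n !nth_mkseq // ltn_pmod.
Qed.

Lemma rcons_nseq (T : Type) a (x : T) : rcons (nseq a x) x = nseq a.+1 x.
Proof. by elim: a => //= a ->. Qed.

Lemma rot_flatten (T : Type) f (ss : seq (seq T)) :
  flatten (rot f ss) = rot (size (flatten (take f ss))) (flatten ss).
Proof.
have -> : flatten ss = flatten (take f ss) ++ flatten (drop f ss).
  by rewrite -flatten_cat cat_take_drop.
by rewrite rot_size_cat /rot flatten_cat.
Qed.

Lemma index_rot1 (T : eqType) (a : T) s : count_mem a s = 1 ->
  index a (rot 1 s) = if index a s == 0 then (size s).-1 else (index a s).-1.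
Proof.
case: s => [//|x s] /= hc; rewrite /rot /= drop0 take0 cats1 -cats1 index_cat.
case: eqP hc => [<-|_] /= hc.
  have /negPf -> : x \notin s by rewrite -has_pred1 has_count; lia.
  by rewrite /= eqxx addn0.
by have -> : a \in s by rewrite -has_pred1 has_count; lia.
Qed.

Definition crot (T : Type) (i : nat) (s : seq T) := rot (i %% size s) s.

Section CyclicRotation.
Variable T : Type.
Implicit Types s : seq T.

Lemma size_crot i s : size (crot i s) = size s.
Proof. by rewrite /crot size_rot. Qed.

Lemma crot0 s : crot 0 s = s.
Proof. by rewrite /crot mod0n rot0. Qed.

Lemma crot1 s : crot 1 s = rot 1 s.
Proof. by case: s => [|x [|y s]]. Qed.

Lemma crotD i j s : crot i (crot j s) = crot (i + j) s.
Proof.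
rewrite /crot size_rot; case: (posnP (size s)) => [/size0nil -> //|s0].
rewrite rot_add_mod; try by apply: ltnW; rewrite ltn_pmod.
rewrite (modnD _ _ s0).
have hi := ltn_pmod i s0; have hj := ltn_pmod j s0.
case: (ltngtP (i %% size s + j %% size s) (size s)) => h.
- by rewrite mul0n subn0.
- by rewrite mul1n.
- by rewrite h mul1n subnn rot0 rot_size.
Qed.

Lemma crotMDr i m s : crot (i + m * size s) s = crot i s.
Proof. by rewrite /crot addnC modnMDl. Qed.

Lemma rot_crot i s : i <= size s -> rot i s = crot i s.
Proof.
rewrite /crot leq_eqVlt => /orP[/eqP->|h]; last by rewrite modn_small.
by rewrite modnn rot0 rot_size.
Qed.

End CyclicRotation.

Section CyclicGeometry.
Variable L : nat.
Hypothesis L_gt0 : 0 < L.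

Lemma off_ltn x m : off L x m < L.
Proof. by rewrite /off ltn_pmod. Qed.

Lemma addn_off x m : (x + off L x m) %% L = m %% L.
Proof.
rewrite /off modnDmr -modnDml.
have h : x %% L < L by rewrite ltn_pmod.
have -> : x %% L + (m %% L + L - x %% L) = m %% L + L by lia.
by rewrite modnDr modn_mod.
Qed.

Lemma off_eq x m d : d < L -> (x + d) %% L = m %% L -> off L x m = d.
Proof.
move=> dL h; have := addn_off x m; rewrite -h => /eqP.
by rewrite eqn_modDl (modn_small dL) modn_small ?off_ltn // => /eqP.
Qed.

Lemma off_modx x m : off L (x %% L) m = off L x m.
Proof. by rewrite /off modn_mod. Qed.

Lemma off_modm x m : off L x (m %% L) = off L x m.
Proof. by rewrite /off modn_mod. Qed.

Lemma offSS x m : off L x.+1 m.+1 = off L x m.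
Proof.
apply: off_eq; first exact: off_ltn.
by rewrite addSn -modnSml addn_off modnSml.
Qed.

Lemma insideE x y m :
  inside L x y m = (0 < off L x m) && (off L x m <= off L x (y + L.-1)).
Proof.
rewrite /inside; suff -> : distp L x y = (off L x (y + L.-1)).+1 by [].
congr S; symmetry; apply: off_eq; first by rewrite ltn_pmod.
rewrite modnDmr {1}(divn_eq x L) -addnA modnMDl.
have h1 : x %% L < L by rewrite ltn_pmod.
have h2 : y %% L < L by rewrite ltn_pmod.
have -> : x %% L + (y %% L + L - x %% L).-1 = y %% L + L.-1 by lia.
by rewrite modnDml.
Qed.

Lemma inside_modx x y m : inside L (x %% L) y m = inside L x y m.
Proof. by rewrite !insideE !off_modx. Qed.

Lemma inside_modm x y m : inside L x y (m %% L) = inside L x y m.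
Proof. by rewrite !insideE off_modm. Qed.

Lemma inside_mody x y m : inside L x (y %% L) m = inside L x y m.
Proof. by rewrite !insideE -(off_modm x (y %% L + _)) modnDml off_modm. Qed.

Lemma insideSSS x y m : inside L x.+1 y.+1 m.+1 = inside L x y m.
Proof. by rewrite !insideE addSn !offSS. Qed.


Lemma off0 m : m < L -> off L 0 m = m.
Proof. by move=> mL; apply: off_eq; rewrite ?add0n. Qed.

End CyclicGeometry.

(** * Transitions under rotation *)

Lemma at_mod w j : at_ w (j %% size w) = at_ w j.
Proof. by rewrite /at_ modn_mod. Qed.

Lemma at_modS w j : at_ w (j %% size w).+1 = at_ w j.+1.
Proof. by rewrite /at_ modnSml. Qed.

Lemma at_rot1 w j : 0 < size w -> at_ (rot 1 w) j = at_ w j.+1.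
Proof. by move=> w0; rewrite /at_ size_rot nth_rot ?ltn_pmod // add1n modnSml. Qed.

Lemma at_small w j : j < size w -> at_ w j = nth (false, 0) w j.
Proof. by move=> h; rewrite /at_ modn_small. Qed.

Lemma swap_at_mod w j : swap_at w (j %% size w) = swap_at w j.
Proof. by rewrite /swap_at modn_mod modnSml at_modS at_mod. Qed.

Lemma T1_mod w k j : T1 w k (j %% size w) = T1 w k j.
Proof. by rewrite /T1 at_mod at_modS swap_at_mod. Qed.

Lemma T3_mod w k j : T3 w k (j %% size w) = T3 w k j.
Proof. by rewrite /T3 at_mod at_modS swap_at_mod. Qed.

Lemma T4_mod n w k j : 0 < size w -> T4 n w k (j %% size w) = T4 n w k j.
Proof.
move=> w0; rewrite /T4 at_mod at_modS modn_mod.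
by case: ifP => // _; congr Some; apply: eq_in_mkseq => m _; rewrite inside_modx.
Qed.

Lemma swap_at_rot1 w j : 0 < size w -> swap_at (rot 1 w) j = rot 1 (swap_at w j.+1).
Proof.
move=> w0; rewrite /swap_at size_rot rot1_mkseq //; apply: eq_in_mkseq => m mL.
rewrite !eqn_modS // !at_rot1 //; case: ifP => // _; case: ifP => // _.
by rewrite at_mod.
Qed.

Lemma T1_rot1 w k j : 0 < size w -> T1 (rot 1 w) k j = omap (rot 1) (T1 w k j.+1).
Proof. by move=> w0; rewrite /T1 !at_rot1 // swap_at_rot1 //; case: ifP. Qed.

Lemma T3_rot1 w k j : 0 < size w -> T3 (rot 1 w) k j = omap (rot 1) (T3 w k j.+1).
Proof. by move=> w0; rewrite /T3 !at_rot1 // swap_at_rot1 //; case: ifP. Qed.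

Lemma T4_rot1 n w k x : 0 < size w -> count_mem (bul (succl n k)) w = 1 ->
  T4 n (rot 1 w) k x = omap (rot 1) (T4 n w k x.+1).
Proof.
move=> w0 hc; rewrite /T4 !at_rot1 // size_rot.
case: ifP => // _ /=; congr Some.
rewrite rot1_mkseq //; apply: eq_in_mkseq => m mL.
set L := size w; set c := index _ w; set c' := index _ (rot 1 w).
have cL : c < L by rewrite /c index_mem -has_pred1 has_count; lia.
have ey : (c + L).-1 %% L = ((c' + L).-1).+1 %% L.
  rewrite /c' index_rot1 // -/c -/L.
  case: eqP => [->|nz]; last by have -> : ((c.-1 + L).-1).+1 = (c + L).-1 by lia.
  rewrite add0n; have -> : ((L.-1 + L).-1).+1 = L.-1 + L by lia.
  by rewrite modnDr.
have ei : inside L x.+1 (c + L).-1 m.+1 = inside L x (c' + L).-1 m.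
  by rewrite -inside_mody // ey inside_mody // insideSSS.
rewrite !eqn_modS // inside_modm // ei ey eqn_modS //.
by rewrite !at_rot1 //; case: ifP => // _; case: ifP => // _; rewrite /L at_modS at_mod.
Qed.

Lemma swap_at_cat (u v : seq letter) a b :
  swap_at (u ++ a :: b :: v) (size u) = u ++ b :: a :: v.
Proof.
set w := u ++ _; have sw : size w = size u + (size v).+2 by rewrite size_cat.
apply: (@eq_from_nth _ (false, 0)); first by rewrite size_mkseq sw size_cat.
move=> i; rewrite size_mkseq => iL; rewrite nth_mkseq //.
rewrite sw !modn_small; try lia.
rewrite !at_small ?sw; try lia.
rewrite /w !nth_cat; have [h|h|->] := ltngtP i (size u).
- have -> : (i == (size u).+1) = false by lia.
  by [].
- case: (i =P (size u).+1) => [->|ne]; first by rewrite ?ltnn ?subSnn ?subnn.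
  have -> : i - size u = (i - size u - 2).+2 by lia.
  by [].
- by rewrite ?ltnn ?subnn /= ?ltnNge ?leqnSn ?subSnn.
Qed.

Lemma T3_cat (u v : seq letter) b k : b != k ->
  T3 (u ++ box b :: bul k :: v) k (size u) = Some (u ++ bul k :: box b :: v).
Proof.
move=> bk; rewrite /T3 swap_at_cat !at_small ?size_cat /=; try lia.
by rewrite !nth_cat ltnn subnn ltnNge leqnSn /= subSnn /= bk eqxx.
Qed.

Lemma T1_cat (u v : seq letter) b k : b != k ->
  T1 (u ++ bul k :: box b :: v) k (size u) = Some (u ++ box b :: bul k :: v).
Proof.
move=> bk; rewrite /T1 swap_at_cat !at_small ?size_cat /=; try lia.
by rewrite !nth_cat ltnn subnn ltnNge leqnSn /= subSnn /= bk eqxx.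
Qed.

Lemma T4_at0 n k (C : seq nat) (V : seq letter) : succl n k != k ->
  T4 n (box k :: bul k :: map box C ++ bul (succl n k) :: V) k 0 =
  Some (bul k :: map box C ++ box (succl n k) :: bul (succl n k) :: V).
Proof.
move=> kk; set ks := succl n k; set w := box k :: _.
have sw : size w = (size C + size V).+3 by rewrite /w /= size_cat size_map /=; lia.
set L := size w; have L0 : 0 < L by rewrite /L sw.
have ci : index (bul ks) w = (size C).+2.
  rewrite /w /= (_ : bul k == bul ks = false); last by rewrite xpair_eqE eq_sym (negbTE kk).
  have /negbTE nC : bul ks \notin map box C by apply/mapP => -[].
  by rewrite /= index_cat nC size_map /= eqxx addn0.
rewrite /T4 ci !at_small -/L ?sw // /= !eqxx /=; congr Some.
have ey : ((size C).+1 + L) %% L = (size C).+1 by rewrite modnDr modn_small // /L sw; lia.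
have eo : off L 0 ((size C).+1 + L + L.-1) = size C.
  apply: off_eq => //; first by rewrite /L sw; lia.
  have -> : (size C).+1 + L + L.-1 = size C + L + L by lia.
  by rewrite !modnDr.
apply: (@eq_from_nth _ (false, 0)).
  by rewrite size_mkseq /L sw /= size_cat /= size_map !addnS.
move=> m; rewrite size_mkseq => mL; rewrite nth_mkseq // ey insideE // off0 // eo.
rewrite (modn_small L0); case: m mL => [//|m] mL /=.
have [h|h|->] := ltngtP m (size C); last by rewrite eqxx nth_cat size_map ltnn subnn.
- have -> : (m.+1 == (size C).+1) = false by lia.
  rewrite at_small; last by lia.
  by rewrite /w /= !nth_cat size_map h.
- have -> : (m.+1 == (size C).+1) = false by lia.
  rewrite at_small; last by lia.
  case: m mL h => [|m] mL h; first by lia.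
  rewrite /w /= !nth_cat size_map.
  have -> : m < size C = false by lia.
  have -> : m.+1 < size C = false by lia.
  by rewrite subSn.
Qed.

Lemma T4_at0_single (C : seq nat) :
  T4 1 (box 0 :: bul 0 :: map box C) 0 0 = Some (bul 0 :: map box C ++ [:: box 0]).
Proof.
set w := box 0 :: _; have sw : size w = (size C).+2 by rewrite /w /= size_map.
set L := size w; have L0 : 0 < L by rewrite /L sw.
rewrite /T4 (_ : index _ w = 1) // !at_small -/L ?sw //=; congr Some.
have eo : off L 0 (0 + L + L.-1) = L.-1.
  apply: off_eq => //.
  by rewrite (_ : 0 + L + L.-1 = L.-1 + L) ?modnDr //; lia.
apply: (@eq_from_nth _ (false, 0)).
  by rewrite size_mkseq /L sw /= size_cat /= size_map addn1.
move=> m; rewrite size_mkseq => mL; rewrite nth_mkseq // add0n modnn insideE // off0 // eo.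
rewrite (modn_small L0); case: m mL => [//|m] mL /=.
rewrite (_ : m < L.-1); last by lia.
case: (ltnP m.+2 L) => h.
  rewrite at_small // /w /= nth_cat size_map.
  by rewrite (_ : m < size C) //; lia.
rewrite (_ : m.+2 = L); last by lia.
rewrite /at_ -/L modnn /w /= nth_cat size_map.
have -> : m < size C = false by lia.
by have -> : m - size C = 0 by lia.
Qed.

(** * Configurations as rotated gap words *)

Lemma bullet_labels_cat u v :
  bullet_labels (u ++ v) = bullet_labels u ++ bullet_labels v.
Proof. by rewrite /bullet_labels filter_cat map_cat. Qed.

Lemma bullet_labels_rot i w :
  bullet_labels (rot i w) = rot (size (bullet_labels (take i w))) (bullet_labels w).
Proof.
have -> : bullet_labels w = bullet_labels (take i w) ++ bullet_labels (drop i w).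
  by rewrite -bullet_labels_cat cat_take_drop.
by rewrite rot_size_cat /rot bullet_labels_cat.
Qed.

Lemma Omega_rot L n w i : Omega L n w -> Omega L n (rot i w).
Proof.
case/and4P => sw aw cw /existsP[r /eqP br].
have pw : perm_eq (rot i w) w by rewrite perm_rot.
apply/and4P; split; first by rewrite size_rot.
- by rewrite (perm_all _ pw).
- by apply/allP => k kin; rewrite (permP pw); move/allP: cw => /(_ k kin).
set c := size (bullet_labels (take i w)).
have cn : c <= n.
  have : size (bullet_labels w) = n by rewrite br size_rot size_iota.
  by rewrite -(cat_take_drop i w) bullet_labels_cat size_cat -/c; lia.
have rn : r <= n by rewrite -ltnS ltn_ord.
have e := @rot_add_mod _ c r (iota 0 n); rewrite size_iota in e.
have crn : (if c + r <= n then c + r else c + r - n) < n.+1 by case: ifP; lia.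
by apply/existsP; exists (Ordinal crn); rewrite bullet_labels_rot br -e.
Qed.

Lemma Omega_crot L n w i : Omega L n w -> Omega L n (crot i w).
Proof. exact: Omega_rot. Qed.

Lemma Omega_size_gt0 L n w : 0 < n -> Omega L n w -> 0 < size w.
Proof.
move=> n0 /and4P[_ _ /allP/(_ 0) cw _].
by move: cw; rewrite mem_iota n0 => /(_ isT); case: w.
Qed.

Lemma Omega_count L n w k : k < n -> Omega L n w -> count_mem (bul k) w = 1.
Proof.
by move=> kn /and4P[_ _ /allP/(_ k) cw _]; apply/eqP/cw; rewrite mem_iota.
Qed.

Definition block (H : nat -> seq nat) (i : nat) : seq letter := bul i :: map box (H i).
Definition word_of (n : nat) (H : nat -> seq nat) : seq letter :=
  flatten (map (block H) (iota 0 n)).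
Definition config (n r : nat) (H : nat -> seq nat) : seq letter := crot r (word_of n H).
Definition valid_gaps (L n : nat) (H : nat -> seq nat) : Prop :=
  (forall i, i < n -> all (fun b => b < n) (H i)) /\ size (word_of n H) = L.

Lemma bullet_labels_blocks H s : bullet_labels (flatten (map (block H) s)) = s.
Proof.
elim: s => //= i s IH; rewrite -cat_cons bullet_labels_cat IH.
by rewrite /bullet_labels /= filter_map /= (@eq_filter _ _ pred0) ?filter_pred0.
Qed.

Lemma count_bul_blocks H s k :
  count_mem (bul k) (flatten (map (block H) s)) = count_mem k s.
Proof.
elim: s => //= i s IH; rewrite count_cat IH /= count_map.
have -> : count (preim box (pred1 (bul k))) (H i) = 0.
  by apply/eqP; rewrite -leqn0 leqNgt -has_count; apply/hasP => -[].
by rewrite add0n /bul xpair_eqE.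
Qed.

Lemma Omega_word L n H : valid_gaps L n H -> Omega L n (word_of n H).
Proof.
case=> hl hs; apply/and4P; split; first by rewrite hs.
- apply/allP => x /flatten_mapP[i]; rewrite mem_iota add0n => /andP[_ iL].
  rewrite inE => /predU1P[-> // | /mapP[b bH ->]].
  by move/allP: (hl i iL) => /(_ b bH).
- apply/allP => k; rewrite mem_iota add0n => /andP[_ kn].
  by rewrite count_bul_blocks count_uniq_mem ?iota_uniq // mem_iota add0n kn.
by apply/existsP; exists ord0; rewrite bullet_labels_blocks rot0.
Qed.

Lemma word_blocks (X : seq letter) : exists pre ps,
  X = map box pre ++ flatten [seq bul p.1 :: map box p.2 | p <- ps] /\
  map fst ps = bullet_labels X.
Proof.
elim: X => [|[[] v] X [pre [ps [-> eb]]]]; first by exists [::], [::].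
- by exists [::], ((v, pre) :: ps); rewrite /= eb.
- by exists (v :: pre), ps.
Qed.

Lemma flatten_blocks_word n (ps : seq (nat * seq nat)) : map fst ps = iota 0 n ->
  flatten [seq bul p.1 :: map box p.2 | p <- ps] =
  word_of n (fun i => nth [::] (map snd ps) i).
Proof.
move=> eb; have sps : size ps = n by rewrite -(size_map fst) eb size_iota.
rewrite /word_of; congr flatten; apply: (@eq_from_nth _ [::]).
  by rewrite !size_map size_iota.
move=> i; rewrite size_map sps => iL.
rewrite (nth_map 0) ?size_iota // (nth_map (0, [::])) ?sps // nth_iota // add0n.
have := congr1 (nth 0 ^~ i) eb; rewrite (nth_map (0, [::])) ?sps // nth_iota //.
by rewrite /block (nth_map (0, [::])) ?sps // add0n; case: (nth _ ps i) => a b /= ->.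
Qed.

Lemma Omega_head_bullet_labels L n X : Omega L n X -> head (box 0) X = bul 0 ->
  bullet_labels X = iota 0 n.
Proof.
case/and4P => _ _ _ /existsP[r /eqP br] hX.
have rn : r <= n by rewrite -ltnS ltn_ord.
rewrite br; move: rn; rewrite leq_eqVlt => /orP[/eqP -> | rn].
  by rewrite -{1}(size_iota 0 n) rot_size.
have r0 : r = 0 :> nat.
  have : head 0 (bullet_labels X) = 0 by case: X hX br => //= x X ->.
  by rewrite br /rot (drop_nth 0) ?size_iota // nth_iota.
by rewrite r0 rot0.
Qed.

Lemma Omega_config L n w : 0 < n -> Omega L n w ->
  exists r H, valid_gaps L n H /\ w = config n r H.
Proof.
move=> n0 Ow; set i0 := index (bul 0) w.
have c0 := Omega_count n0 Ow.
have i0w : i0 < size w by rewrite index_mem -has_pred1 has_count c0.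
have hX : head (box 0) (rot i0 w) = bul 0.
  by rewrite /rot (drop_nth (bul 0) i0w) nth_index // -has_pred1 has_count c0.
have OX : Omega L n (rot i0 w) by apply: Omega_rot.
have [pre [ps [eX eb]]] := word_blocks (rot i0 w).
rewrite (Omega_head_bullet_labels OX hX) in eb.
have pre0 : pre = [::] by case: pre eX hX => // b pre ->.
rewrite pre0 (flatten_blocks_word eb) /= in eX.
set H := fun i => _ in eX.
exists (size w - i0), H; split; last first.
  rewrite /config -eX -rot_crot; last by rewrite size_rot leq_subr.
  by rewrite -{1}(rotK i0 w) /rotr size_rot.
case/and4P: OX => /eqP sX /allP aX _ _; split; last by rewrite -eX.
move=> i iL; apply/allP => b bH; apply: (aX (box b)).
rewrite eX; apply/flatten_mapP; exists i; first by rewrite mem_iota.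
by rewrite inE map_f.
Qed.

(** * Reachability up to rotation *)

Definition step (n : nat) (w w' : seq letter) : Prop :=
  exists2 k, k < n & exists j,
    [\/ T1 w k j = Some w', T3 w k j = Some w' | T4 n w k j = Some w'].

Lemma sumr_gt0_mem (R : numDomainType) (I : eqType) (r : seq I) (F : I -> R) i0 :
  i0 \in r -> (forall i, 0 <= F i)%R -> (0 < F i0)%R -> (0 < \sum_(i <- r) F i)%R.
Proof.
move=> ir F0 Fi0; rewrite lt0r sumr_ge0 // andbT psumr_neq0 //.
by apply/hasP; exists i0; rewrite // gt_eqF.
Qed.

Lemma rate_gt0 (R : numDomainType) (p q : nat -> R) n w w' :
  (forall k, k < n -> (0 < p k)%R) -> (forall k, k < n -> (0 < q k)%R) ->
  0 < size w -> step n w w' -> (0 < rate p q n w w')%R.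
Proof.
move=> hp hq w0 [k kn [j hj]].
pose t (k : 'I_n) j := (p k *+ (T1 w k j == Some w') + p k *+ (T2 n w k j == Some w')
      + q k *+ (T3 w k j == Some w') + q k *+ (T4 n w k j == Some w'))%R.
have t_ge0 k' j' : (0 <= t k' j')%R.
  by rewrite !addr_ge0 // mulrn_wge0 // ltW // (hp, hq).
apply: (@sumr_gt0_mem _ _ _ _ (Ordinal kn)) => [|k'|]; rewrite ?mem_index_enum //.
  by apply: sumr_ge0 => j' _; apply: t_ge0.
have jw : j %% size w < size w by rewrite ltn_pmod.
apply: (@sumr_gt0_mem _ _ _ _ (Ordinal jw)) => [|j'|]; rewrite ?mem_index_enum //.
  exact: t_ge0.
rewrite lt0r t_ge0 andbT /t /= T1_mod T3_mod T4_mod //.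
have [pk0 qk0] := (gt_eqF (hp k kn), gt_eqF (hq k kn)).
rewrite !paddr_eq0 ?addr_ge0 ?mulrn_wge0 ?ltW ?hp ?hq // !mulrn_eq0 pk0 qk0 /=.
by case: hj => ->; rewrite eqxx /= ?andbF.
Qed.

Lemma step_rot1 L n w w' : 0 < n -> Omega L n w -> step n w w' ->
  step n (rot 1 w) (rot 1 w').
Proof.
move=> n0 Ow [k kn [j hj]]; exists k => //; exists (j + size w).-1.
have w0 := Omega_size_gt0 n0 Ow.
have e1 : ((j + size w).-1).+1 = j + size w by lia.
have ks : count_mem (bul (succl n k)) w = 1 by apply: Omega_count Ow; rewrite ltn_pmod.
case: hj => h; [apply: Or31 | apply: Or32 | apply: Or33].
- by rewrite T1_rot1 // e1 -T1_mod modnDr T1_mod h.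
- by rewrite T3_rot1 // e1 -T3_mod modnDr T3_mod h.
- by rewrite T4_rot1 // e1 -T4_mod // modnDr T4_mod // h.
Qed.

Lemma step_crot L n i w w' : 0 < n -> Omega L n w -> step n w w' ->
  step n (crot i w) (crot i w').
Proof.
move=> n0 Ow h; elim: i => [|i IH]; first by rewrite !crot0.
rewrite -add1n -!crotD !crot1.
exact: step_rot1 n0 (Omega_crot i Ow) IH.
Qed.

Section Reachability.
Variables (L n : nat) (e : rel (seq letter)).
Hypothesis step_e : forall a b, Omega L n a -> step n a b -> e a b.
Hypothesis n_gt0 : 0 < n.

Definition reach a b := exists s, [&& path e a s, all (Omega L n) s & last a s == b].

Lemma reach_refl a : reach a a.
Proof. by exists [::]; rewrite /= eqxx. Qed.

Lemma reach_trans a b c : reach a b -> reach b c -> reach a c.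
Proof.
move=> [s1 /and3P[p1 a1 /eqP l1]] [s2 /and3P[p2 a2 /eqP l2]].
by exists (s1 ++ s2); rewrite cat_path all_cat last_cat l1 p1 p2 a1 a2 l2 eqxx.
Qed.

Lemma reach_step a b : Omega L n a -> step n a b -> Omega L n b -> reach a b.
Proof. by move=> Oa ab Ob; exists [:: b]; rewrite /= step_e // Ob eqxx. Qed.

Definition reach_shift d H H' := forall r, reach (config n r H) (config n (r + d) H').

Lemma reach_shift_mod d d' H H' : valid_gaps L n H' -> d = d' %[mod L] ->
  reach_shift d H H' -> reach_shift d' H H'.
Proof.
move=> [_ sH'] dd' h r; have := h r.
by rewrite /config /crot sH' -modnDmr dd' modnDmr.
Qed.

Lemma reach_shift_trans d1 d2 H1 H2 H3 :
  reach_shift d1 H1 H2 -> reach_shift d2 H2 H3 -> reach_shift (d1 + d2) H1 H3.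
Proof. by move=> h1 h2 r; apply: reach_trans (h1 r) _; rewrite addnA; apply: h2. Qed.

Lemma reach_shift0 H : reach_shift 0 H H.
Proof. by move=> r; rewrite addn0; apply: reach_refl. Qed.

Lemma reach_shiftM d H m : reach_shift d H H -> reach_shift (m * d) H H.
Proof.
move=> h; elim: m => [|m IH]; first exact: reach_shift0.
by rewrite mulSn; apply: reach_shift_trans.
Qed.

Lemma reach_shift_step a a' H H' : valid_gaps L n H -> valid_gaps L n H' ->
  step n (crot a (word_of n H)) (crot a' (word_of n H')) ->
  reach_shift (a' + L - a %% L) H H'.
Proof.
move=> vH vH' hs r; have [_ sH] := vH.
have L0 : 0 < L by rewrite -sH; apply: Omega_size_gt0 n_gt0 (Omega_word vH).
have := step_crot (r + L - a %% L) n_gt0 (Omega_crot a (Omega_word vH)) hs.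
rewrite !crotD.
have aL : a %% L < L by rewrite ltn_pmod.
have -> : crot (r + L - a %% L + a) (word_of n H) = config n r H.
  rewrite /config -(crotMDr r (a %/ L).+1) sH; congr crot.
  by rewrite {2}(divn_eq a L); lia.
have -> : r + L - a %% L + a' = r + (a' + L - a %% L) by lia.
by move=> st; apply: (reach_step _ st); apply/Omega_crot/Omega_word.
Qed.

End Reachability.

(** * Moving a box across a bullet *)

Section Labels.
Variable n : nat.
Hypothesis n_gt0 : 0 < n.

Lemma predl_ltn k : predl n k < n.
Proof. by rewrite ltn_pmod. Qed.

Lemma succl_ltn k : succl n k < n.
Proof. by rewrite ltn_pmod. Qed.

Lemma succl_predl k : k < n -> succl n (predl n k) = k.
Proof.
move=> kn; rewrite /succl /predl modnSml.
have -> : (k + n.-1).+1 = k + n by lia.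
by rewrite modnDr modn_small.
Qed.

Lemma predl_succl m : predl n (succl n m) = m %% n.
Proof.
rewrite /predl /succl modnDml.
have -> : m.+1 + n.-1 = m + n by lia.
by rewrite modnDr.
Qed.

Lemma predl_pred k : 0 < k -> k < n -> predl n k = k.-1.
Proof.
move=> k0 kn; rewrite /predl.
have -> : k + n.-1 = k.-1 + n by lia.
by rewrite modnDr modn_small; lia.
Qed.

Lemma predl0 : predl n 0 = n.-1.
Proof. by rewrite /predl add0n modn_small; lia. Qed.

End Labels.

Lemma succl_neq n k : 1 < n -> k < n -> succl n k != k.
Proof.
move=> n1 kn; rewrite /succl; case: (ltnP k.+1 n) => h.
  by rewrite modn_small //; lia.
have -> : k.+1 = n by lia.
by rewrite modnn; lia.
Qed.

Lemma predl_neq n k : 1 < n -> k < n -> predl n k != k.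
Proof.
move=> n1 kn; apply: contraTneq (succl_neq n1 kn) => e.
by rewrite -{1}e succl_predl ?e //; lia.
Qed.

Lemma nth_rot_iota n a i : a <= n -> i < n -> nth 0 (rot a (iota 0 n)) i = (a + i) %% n.
Proof.
by move=> an iL; rewrite nth_rot ?size_iota // nth_iota // ltn_pmod //; lia.
Qed.

Lemma rot_predl_iota n k : 1 < n -> k < n ->
  rot (predl n k) (iota 0 n) = predl n k :: k :: drop 2 (rot (predl n k) (iota 0 n)).
Proof.
move=> n1 kn; set s := rot _ _.
have ss : size s = n by rewrite size_rot size_iota.
have kpn : predl n k <= n by rewrite ltnW // predl_ltn //; lia.
rewrite -{1}(drop0 s) (drop_nth 0) ?ss; last by lia.
rewrite (drop_nth 0) ?ss; last by lia.
rewrite !nth_rot_iota //; try lia.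
have n0 : 0 < n by lia.
rewrite addn0 addn1 (modn_small (predl_ltn n0 k)).
by rewrite -[(predl n k).+1 %% n]/(succl n (predl n k)) succl_predl.
Qed.

Lemma drop2_rot_predl_iota n k : 2 < n -> k < n ->
  drop 2 (rot (predl n k) (iota 0 n)) = succl n k :: drop 3 (rot (predl n k) (iota 0 n)).
Proof.
move=> n2 kn; have kpn : predl n k <= n by rewrite ltnW // predl_ltn //; lia.
rewrite (drop_nth 0) ?size_rot ?size_iota //; congr cons.
rewrite nth_rot_iota // addn2 -modnSml -[(predl n k).+1 %% n]/(succl n (predl n k)).
by rewrite succl_predl //; lia.
Qed.

Definition set_gap (H : nat -> seq nat) (i : nat) (v : seq nat) : nat -> seq nat :=
  fun j => if j == i then v else H j.

Definition block_pos (f : nat) (H : nat -> seq nat) : nat :=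
  sumn [seq (size (H i)).+1 | i <- iota 0 f].

Lemma size_flatten_blocks H s :
  size (flatten (map (block H) s)) = sumn [seq (size (H i)).+1 | i <- s].
Proof. by elim: s => //= i s IH; rewrite size_cat IH /= size_map. Qed.

Lemma word_of_rot n f H : f <= n ->
  flatten (map (block H) (rot f (iota 0 n))) = crot (block_pos f H) (word_of n H).
Proof.
move=> fn; rewrite map_rot rot_flatten -map_take take_iota (minn_idPl fn).
rewrite rot_crot size_flatten_blocks //.
rewrite /word_of -(subnKC fn) iotaD map_cat flatten_cat size_cat.
by rewrite size_flatten_blocks leq_addr.
Qed.

Lemma word_of_eq n H H' : {in gtn n, H =1 H'} -> word_of n H = word_of n H'.
Proof.
move=> h; rewrite /word_of; congr flatten; apply/eq_in_map => i.
by rewrite mem_iota add0n /block => /andP[_ /h ->].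
Qed.

Lemma block_pos_eq f H H' : {in gtn f, H' =1 H} -> block_pos f H' = block_pos f H.
Proof.
move=> h; rewrite /block_pos; congr sumn; apply/eq_in_map => i.
by rewrite mem_iota add0n => /andP[_ /h ->].
Qed.

Lemma block_pos_rcons0 f H H' x : 0 < f -> H' 0 = rcons (H 0) x ->
  (forall i, 0 < i < f -> H' i = H i) -> block_pos f H' = (block_pos f H).+1.
Proof.
case: f => [//|f] _ h0 h; rewrite /block_pos -add1n iotaD /= h0 size_rcons.
rewrite addSn; congr (_ + _).+1; congr sumn; apply/eq_in_map => i.
by rewrite mem_iota => /andP[i0 iL]; rewrite h //; lia.
Qed.

Lemma valid_gaps_rcons L n H i t b : valid_gaps L n H -> i < n -> H i = rcons t b ->
  b < n /\ all (fun c => c < n) t.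
Proof. by case=> hl _ iL hi; move: (hl i iL); rewrite hi all_rcons => /andP. Qed.

Lemma gaps_bounded_set n H j v :
  (forall i, i < n -> all (fun b => b < n) (H i)) -> all (fun b => b < n) v ->
  forall i, i < n -> all (fun b => b < n) (set_gap H j v i).
Proof. by move=> hH hv i iL; rewrite /set_gap; case: eqP => _; [apply: hv | apply: hH]. Qed.

Lemma valid_gaps_crot L n H H' a a' : valid_gaps L n H ->
  (forall i, i < n -> all (fun b => b < n) (H' i)) ->
  size (crot a' (word_of n H')) = size (crot a (word_of n H)) -> valid_gaps L n H'.
Proof. by move=> [_ <-] hl; rewrite !size_crot. Qed.

Definition rest_labels n k := drop 2 (rot (predl n k) (iota 0 n)).

Lemma word_at_predl n H k : 1 < n -> k < n ->
  crot (block_pos (predl n k) H) (word_of n H) =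
  block H (predl n k) ++ block H k ++ flatten (map (block H) (rest_labels n k)).
Proof.
move=> n1 kn; rewrite -word_of_rot; last by rewrite ltnW // predl_ltn //; lia.
by rewrite rot_predl_iota.
Qed.

Lemma rest_labels_blocks n H H' k : 1 < n -> k < n ->
  (forall i, i != predl n k -> i != k -> H' i = H i) ->
  map (block H') (rest_labels n k) = map (block H) (rest_labels n k).
Proof.
move=> n1 kn hH; have := iota_uniq 0 n; rewrite -(rot_uniq (predl n k)).
rewrite rot_predl_iota // -/(rest_labels n k) => /and3P[/norP[_ kpR] kR _].
apply/eq_in_map => i iR; rewrite /block hH //.
- by apply: contraNneq kpR => <-.
- by apply: contraNneq kR => ik; rewrite -{1}ik.
Qed.

Lemma rest_labels_cons n k (s : seq letter) : 1 < n -> k < n -> exists V,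
  forall H, flatten (map (block H) (rest_labels n k)) ++ bul (predl n k) :: s =
            bul (succl n k) :: V H.
Proof.
move=> n1 kn; case: (ltnP 2 n) => n2.
  exists (fun H => map box (H (succl n k)) ++
    flatten (map (block H) (drop 3 (rot (predl n k) (iota 0 n)))) ++ bul (predl n k) :: s).
  by move=> H; rewrite /rest_labels drop2_rot_predl_iota //= catA.
have -> : n = 2 by lia.
exists (fun _ => s) => H.
have -> : rest_labels 2 k = [::] by apply: size0nil; rewrite size_drop size_rot size_iota.
by rewrite /= /predl /succl addn1.
Qed.

Lemma set_gap_id H i : set_gap H i (H i) = H.
Proof. by apply: functional_extensionality => j; rewrite /set_gap; case: eqP => // ->. Qed.

Lemma set_gapK H i v w : set_gap (set_gap H i v) i w = set_gap H i w.
Proof. by apply: functional_extensionality => j; rewrite /set_gap; case: eqP. Qed.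

Lemma block_pos_push n H k t x : 1 < n -> k < n ->
  block_pos (predl n k) (set_gap (set_gap H (predl n k) t) k (rcons (H k) x)) =
  block_pos (predl n k) H + (k == 0).
Proof.
move=> n1 kn; case: eqP => [k0|k0].
  rewrite addn1; apply: block_pos_rcons0.
  - by rewrite k0 predl0 //; lia.
  - by rewrite k0 /set_gap eqxx.
  move=> i /andP[i0 ikp]; rewrite /set_gap.
  have -> : (i == k) = false by rewrite k0; lia.
  by have -> : (i == predl n k) = false by lia.
rewrite addn0 predl_pred; try lia.
apply: block_pos_eq => i; rewrite inE => ik; rewrite /set_gap.
have -> : (i == k) = false by lia.
by have -> : (i == k.-1) = false by lia.
Qed.

Section Moves.
Variables (L n : nat) (e : rel (seq letter)).
Hypothesis step_e : forall a b, Omega L n a -> step n a b -> e a b.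
Hypothesis n_gt1 : 1 < n.
Let n_gt0 : 0 < n := ltnW n_gt1.

Local Notation reach_shift := (reach_shift L n e).

Definition linked H H' := [/\ valid_gaps L n H, valid_gaps L n H',
  exists d, reach_shift d H H' & exists d, reach_shift d H' H].

Lemma linked_refl H : valid_gaps L n H -> linked H H.
Proof. by move=> v; split => //; exists 0; apply: reach_shift0. Qed.

Lemma linked_trans H1 H2 H3 : linked H1 H2 -> linked H2 H3 -> linked H1 H3.
Proof.
move=> [v1 v2 [d1 m1] [d1' m1']] [_ v3 [d2 m2] [d2' m2']]; split => //.
  by exists (d1 + d2); apply: reach_shift_trans m1 m2.
by exists (d2' + d1'); apply: reach_shift_trans m2' m1'.
Qed.

Lemma linked_eq H1 H2 H3 : linked H1 H2 -> {in gtn n, H2 =1 H3} -> linked H1 H3.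
Proof.
move=> [v1 [l2 s2] [d m] [d' m']] h; have ew := word_of_eq h.
have v3 : valid_gaps L n H3 by split; [move=> i iL; rewrite -h ?l2 | rewrite -ew].
by split => //; [exists d | exists d'] => r; rewrite /config -ew; [apply: m | apply: m'].
Qed.

Lemma linked_box_across H k t b : valid_gaps L n H -> k < n -> b < n -> b != k ->
  H (predl n k) = rcons t b ->
  linked H (set_gap (set_gap H (predl n k) t) k (b :: H k)).
Proof.
move=> vH kn bn bk hkp; set kp := predl n k in hkp *; set H' := set_gap _ _ _.
have kpk : kp != k by apply: predl_neq.
have eR : map (block H') (rest_labels n k) = map (block H) (rest_labels n k).
  by apply: rest_labels_blocks => // i i1 i2; rewrite /H' /set_gap (negbTE i1) (negbTE i2).
set F := flatten (map (block H) (rest_labels n k)).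
have W : crot (block_pos kp H) (word_of n H) =
         (bul kp :: map box t) ++ box b :: bul k :: map box (H k) ++ F.
  by rewrite word_at_predl // /block hkp map_rcons -rcons_cons cat_rcons.
have W' : crot (block_pos kp H') (word_of n H') =
          (bul kp :: map box t) ++ bul k :: box b :: map box (H k) ++ F.
  by rewrite word_at_predl // eR /block /H' /set_gap eqxx (negbTE kpk) eqxx.
have vH' : valid_gaps L n H'.
  case: (vH) => hl _.
  apply: (valid_gaps_crot (a := block_pos kp H) (a' := block_pos kp H') vH);
    last by rewrite W W' !size_cat.
  apply: gaps_bounded_set; last by rewrite /= bn hl.
  by apply: gaps_bounded_set => //; case: (valid_gaps_rcons vH (predl_ltn n_gt0 k) hkp).
split => //.
- exists (block_pos kp H' + L - block_pos kp H %% L); apply: reach_shift_step => //.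
  rewrite W W'; exists k => //; exists (size (bul kp :: map box t)).
  by apply: Or32; apply: T3_cat.
- exists (block_pos kp H + L - block_pos kp H' %% L); apply: reach_shift_step => //.
  rewrite W W'; exists k => //; exists (size (bul kp :: map box t)).
  by apply: Or31; apply: T1_cat.
Qed.

Lemma reach_shift_push H k t : valid_gaps L n H -> k < n -> H (predl n k) = rcons t k ->
  let H' := set_gap (set_gap H (predl n k) t) k (rcons (H k) (succl n k)) in
  valid_gaps L n H' /\ reach_shift (k == 0) H H'.
Proof.
move=> vH kn hkp H'; set kp := predl n k in hkp H' *; set ks := succl n k in H' *.
have kpk : kp != k by apply: predl_neq.
have eR : map (block H') (rest_labels n k) = map (block H) (rest_labels n k).
  by apply: rest_labels_blocks => // i i1 i2; rewrite /H' /set_gap (negbTE i1) (negbTE i2).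
set F := flatten (map (block H) (rest_labels n k)); set u := bul kp :: map box t.
have [V eV] := rest_labels_cons (map box t) n_gt1 kn.
have eF : F ++ u = bul ks :: V H by apply: eV.
have rot_u s : size u <= size (u ++ s) by rewrite size_cat leq_addr.
have W : crot (size u + block_pos kp H) (word_of n H) =
         box k :: bul k :: map box (H k) ++ bul ks :: V H.
  rewrite -crotD word_at_predl // -/F [block H kp]/block hkp map_rcons -rcons_cons.
  rewrite cat_rcons -/u.
  by rewrite -rot_crot // rot_size_cat /= -catA; congr [:: _, _ & _ ++ _].
have W' : crot (size u + block_pos kp H') (word_of n H') =
          bul k :: map box (H k) ++ box ks :: bul ks :: V H.
  rewrite -crotD word_at_predl // eR -/F [block H' kp]/block [block H' k]/block.
  rewrite /H' /set_gap eqxx (negbTE kpk) eqxx -/u.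
  rewrite -rot_crot // rot_size_cat map_rcons /= cat_rcons -catA.
  by congr [:: _ & _ ++ _ :: _].
have vH' : valid_gaps L n H'.
  case: (vH) => hl _.
  apply: (valid_gaps_crot (a := size u + block_pos kp H) (a' := size u + block_pos kp H') vH);
    last by rewrite W W' /= !size_cat /= !addnS.
  apply: gaps_bounded_set; last by rewrite all_rcons succl_ltn ?hl.
  by apply: gaps_bounded_set => //; case: (valid_gaps_rcons vH (predl_ltn n_gt0 k) hkp).
split => //.
have st : step n (crot (size u + block_pos kp H) (word_of n H))
                 (crot (size u + block_pos kp H') (word_of n H')).
  by rewrite W W'; exists k => //; exists 0; apply: Or33; apply: T4_at0; apply: succl_neq.
apply: reach_shift_mod vH' _ (reach_shift_step step_e n_gt0 vH vH' st).
have L0 : 0 < L by case: (vH) => _ <-; apply: Omega_size_gt0 n_gt0 (Omega_word vH).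
by rewrite /H' block_pos_push // addnA addn_sub_modn.
Qed.

End Moves.

Section Cascade.
Variables (L n : nat) (e : rel (seq letter)).
Hypothesis step_e : forall a b, Omega L n a -> step n a b -> e a b.
Hypothesis n_gt1 : 1 < n.
Let n_gt0 : 0 < n := ltnW n_gt1.
Variables (H : nat -> seq nat) (k : nat) (t : seq nat).
Hypothesis k_lt_n : k < n.
Hypothesis gap_predl : H (predl n k) = rcons t k.

Local Notation reach_shift := (reach_shift L n e).

(* After [i] pushes the extra box ends gap [predl n k + i]. After [n] pushes it is back
   where it started, and the configuration has turned by the number of times it crossed
   bullet [0]: this undoes a push, and rotates the canonical configuration by one. *)
Definition cascade i :=
  let j := (predl n k + i) %% n in
  set_gap (set_gap H (predl n k) t) j (rcons (set_gap H (predl n k) t j) (succl n j)).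

Definition cascade_shift i : nat := (predl n k + i).+1 %% n == 0.

Lemma cascade0 : cascade 0 = H.
Proof.
rewrite /cascade addn0 modn_small ?predl_ltn // succl_predl //.
have -> : set_gap H (predl n k) t (predl n k) = t by rewrite /set_gap eqxx.
by rewrite set_gapK -gap_predl set_gap_id.
Qed.

Lemma cascade_n : cascade n = cascade 0.
Proof. by rewrite /cascade addn0 modnDr. Qed.

Lemma cascade_step i : valid_gaps L n (cascade i) ->
  valid_gaps L n (cascade i.+1) /\ reach_shift (cascade_shift i) (cascade i) (cascade i.+1).
Proof.
move=> vS; set j := (predl n k + i) %% n; set c := succl n j.
have pc : predl n c = j by rewrite predl_succl // modn_mod.
have cj : c != j by rewrite -pc eq_sym predl_neq // succl_ltn.
have hS : cascade i (predl n c) = rcons (set_gap H (predl n k) t j) c.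
  by rewrite pc /cascade /set_gap eqxx.
have [] := reach_shift_push step_e n_gt1 vS (succl_ltn n_gt0 j) hS.
suff -> : set_gap (set_gap (cascade i) (predl n c) (set_gap H (predl n k) t j)) c
            (rcons (cascade i c) (succl n c)) = cascade i.+1.
  by rewrite (_ : cascade_shift i = (c == 0)) // /cascade_shift /c /succl /j modnSml.
rewrite pc /cascade -/j set_gapK set_gap_id /set_gap (negbTE cj).
rewrite (_ : (predl n k + i.+1) %% n = c) ?(negbTE cj) //.
by rewrite /c /succl modnSml addnS.
Qed.

Lemma cascade_chain a m : valid_gaps L n (cascade a) ->
  valid_gaps L n (cascade (a + m)) /\
  reach_shift (\sum_(a <= i < a + m) cascade_shift i) (cascade a) (cascade (a + m)).
Proof.
move=> va; elim: m => [|m [vm hm]].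
  by rewrite addn0 big_geq //; split => //; apply: reach_shift0.
have [vm' hm'] := cascade_step vm; rewrite addnS big_nat_recr ?leq_addr //=.
by split => //; apply: reach_shift_trans hm hm'.
Qed.

Lemma cascade1 : cascade 1 = set_gap (set_gap H (predl n k) t) k (rcons (H k) (succl n k)).
Proof.
rewrite /cascade addn1 -/(succl n _) succl_predl // /set_gap.
by rewrite eq_sym (negbTE (predl_neq n_gt1 k_lt_n)).
Qed.

Lemma linked_push : valid_gaps L n H ->
  linked L n e H (set_gap (set_gap H (predl n k) t) k (rcons (H k) (succl n k))).
Proof.
move=> vH; have [v1 h1] := reach_shift_push step_e n_gt1 vH k_lt_n gap_predl.
split => //; first by exists (k == 0 : nat).
rewrite -cascade1 in v1 *; have [_ h] := cascade_chain n.-1 v1.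
by rewrite add1n prednK // cascade_n cascade0 in h; eexists; apply: h.
Qed.

End Cascade.

(** * Sorting into the canonical configuration *)

Section Sorting.
Variables (L n : nat) (e : rel (seq letter)).
Hypothesis step_e : forall a b, Omega L n a -> step n a b -> e a b.
Hypothesis n_gt1 : 1 < n.
Let n_gt0 : 0 < n := ltnW n_gt1.

Local Notation linked := (linked L n e).

Lemma linked_move_box H k t b : valid_gaps L n H -> k < n -> H (predl n k) = rcons t b ->
  linked H (set_gap (set_gap H (predl n k) t) k
              (if b == k then rcons (H k) (succl n k) else b :: H k)).
Proof.
move=> vH kn hb; case: eqP => [bk|/eqP bk].
  by rewrite bk in hb; apply: linked_push.
apply: linked_box_across => //.
by case: (valid_gaps_rcons vH (predl_ltn n_gt0 k) hb).
Qed.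

Lemma linked_empty_gap k H : k < n -> valid_gaps L n H -> exists2 H', linked H H' &
  H' (predl n k) = [::] /\ forall i, i != predl n k -> i != k -> H' i = H i.
Proof.
move=> kn; move: {2}(H (predl n k)) (erefl (H (predl n k))) => s.
elim/last_ind: s H => [|t b IH] H hs vH; first by exists H => //; apply: linked_refl.
have kpk := predl_neq n_gt1 kn.
have l1 := linked_move_box vH kn hs; case: (l1) => _ v1 _ _.
have [|H2 l2 [e2 r2]] := IH _ _ v1; first by rewrite /set_gap (negbTE kpk) eqxx.
exists H2; first exact: linked_trans l1 l2.
by split => // i i1 i2; rewrite r2 // /set_gap (negbTE i1) (negbTE i2).
Qed.

Lemma linked_empty_gaps m H : m < n -> valid_gaps L n H ->
  exists2 H', linked H H' & forall i, i < m -> H' i = [::].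
Proof.
elim: m => [|m IH] mn vH; first by exists H => //; apply: linked_refl.
have [H1 l1 e1] := IH (ltnW mn) vH; case: (l1) => _ v1 _ _.
have [H2 l2 [e2 r2]] := linked_empty_gap mn v1; rewrite predl_pred // in e2 r2.
exists H2; first exact: linked_trans l1 l2.
move=> i; rewrite ltnS leq_eqVlt => /orP[/eqP -> // | im].
by rewrite r2 ?e1 //; lia.
Qed.

Definition staged a s i := if i == n.-1 then s else if i == n.-2 then nseq a n.-1 else [::].

Definition carrying a s j b :=
  set_gap (staged a s) (predl n j) (rcons (staged a s (predl n j)) b).

Lemma linked_carrying_step a s j b : j < n -> valid_gaps L n (carrying a s j b) ->
  linked (carrying a s j b) (set_gap (staged a s) j
    (if b == j then rcons (staged a s j) (succl n j) else b :: staged a s j)).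
Proof.
move=> jn vS; have hS : carrying a s j b (predl n j) = rcons (staged a s (predl n j)) b.
  by rewrite /carrying /set_gap eqxx.
have Sj : carrying a s j b j = staged a s j.
  by rewrite /carrying /set_gap ifN_eqC // predl_neq.
have := linked_move_box vS jn hS.
by rewrite Sj /carrying set_gapK set_gap_id.
Qed.

Lemma linked_carry_box a s j b : j <= n.-2 -> j <= b < n ->
  valid_gaps L n (carrying a s j b) -> linked (carrying a s j b) (staged a.+1 s).
Proof.
move=> jn; have [d jd] : exists d, j + d = n.-2 by exists (n.-2 - j); lia.
elim: d j b jn jd => [|d IH] j b jn jd /andP[jb bn] vS.
  rewrite addn0 in jd; subst j.
  have sj : staged a s n.-2 = nseq a n.-1.
    by rewrite /staged (_ : n.-2 == n.-1 = false) ?eqxx //; lia.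
  have n2n : n.-2 < n by lia.
  have := linked_carrying_step n2n vS; rewrite sj.
  have -> : (if b == n.-2 then rcons (nseq a n.-1) (succl n n.-2) else b :: nseq a n.-1) =
            nseq a.+1 n.-1.
    case: eqP => [_|bj]; last by have -> : b = n.-1 by lia.
    rewrite /succl modn_small; last lia.
    have -> : n.-2.+1 = n.-1 by lia.
    exact: rcons_nseq.
  have -> : set_gap (staged a s) n.-2 (nseq a.+1 n.-1) = staged a.+1 s.
    apply: functional_extensionality => i; rewrite /set_gap /staged.
    by case: eqP => [->|//]; rewrite (_ : n.-2 == n.-1 = false) ?eqxx //; lia.
  by [].
have jn' : j < n by lia.
have sj : staged a s j = [::].
  rewrite /staged; have -> : (j == n.-1) = false by lia.
  by have -> : (j == n.-2) = false by lia.
set b' := if b == j then succl n j else b.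
have l1 : linked (carrying a s j b) (carrying a s j.+1 b').
  have -> : carrying a s j.+1 b' = set_gap (staged a s) j [:: b'].
    have pj : predl n j.+1 = j by rewrite predl_pred //; lia.
    by rewrite /carrying pj sj.
  by have := linked_carrying_step jn' vS; rewrite sj /b'; case: eqP.
case: (l1) => _ v1 _ _; apply: linked_trans l1 (IH _ _ _ _ _ v1); try lia.
rewrite /b'; case: (eqVneq b j) => [_|bj]; last lia.
by rewrite /succl modn_small; lia.
Qed.

Lemma linked_drain_last_gap s a : valid_gaps L n (staged a s) ->
  linked (staged a s) (staged (a + size s) [::]).
Proof.
elim/last_ind: s a => [|s l IH] a vS; first by rewrite addn0; apply: linked_refl.
have hs : staged a (rcons s l) n.-1 = rcons s l by rewrite /staged eqxx.
have n1n : n.-1 < n by lia.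
have [ln _] := valid_gaps_rcons vS n1n hs.
have e0 : staged a (rcons s l) = carrying a s 0 l.
  rewrite /carrying predl0 //; apply: functional_extensionality => i.
  by rewrite /set_gap {2}/staged eqxx /staged; case: eqP.
rewrite e0 in vS *; have l1 := linked_carry_box (leq0n n.-2) (ln : 0 <= l < n) vS.
case: (l1) => _ v2 _ _.
by rewrite size_rcons addnS -addSn; apply: linked_trans l1 (IH _ v2).
Qed.

Definition canonical N i := if i == n.-2 then nseq N n.-1 else [::].

Lemma linked_canonical H : valid_gaps L n H -> exists N, linked H (canonical N).
Proof.
move=> vH; have [H1 l1 e1] : exists2 H1, linked H H1 & forall i, i < n.-1 -> H1 i = [::].
  by apply: linked_empty_gaps vH; lia.
have l2 : linked H (staged 0 (H1 n.-1)).
  apply: linked_eq l1 _ => i; rewrite inE => iL; rewrite /staged.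
  case: eqP => [-> // | ne]; rewrite e1; [by case: eqP | lia].
case: (l2) => _ v2 _ _; exists (size (H1 n.-1)).
apply: linked_eq (linked_trans l2 (linked_drain_last_gap v2)) _ => i _.
rewrite /staged /canonical add0n; case: eqP => [->|_] //.
by have -> : (n.-1 == n.-2) = false by lia.
Qed.

End Sorting.

(** * Rotating the canonical configuration *)

Lemma size_word_canonical n N : 0 < n -> size (word_of n (canonical n N)) = n + N.
Proof.
move=> n0; rewrite size_flatten_blocks sumnE big_map.
under eq_bigr => i _ do rewrite -addn1.
rewrite big_split /= sum1_size size_iota addnC.
rewrite (bigD1_seq n.-2) ?iota_uniq //=; last by rewrite mem_iota; lia.
rewrite big1 => [|i i2]; first by rewrite /canonical eqxx size_nseq addn0.
by rewrite /canonical (negbTE i2).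
Qed.

Lemma sum_modn_eq0 n : 1 < n -> \sum_(0 <= i < n) ((n.-2 + i).+1 %% n == 0 : nat) = 1.
Proof.
move=> n1; rewrite (bigD1_seq 1) ?iota_uniq //=; last by rewrite mem_iota; lia.
have -> : (n.-2 + 1).+1 = n by lia.
rewrite modnn big1_seq // => i /andP[i1]; rewrite mem_iota => /andP[_ iL].
case: i i1 iL => [|j] j1 jL; first by rewrite addn0 modn_small //; lia.
have -> : (n.-2 + j.+1).+1 = j + n by lia.
by rewrite modnDr modn_small; [case: j j1 {jL} | lia].
Qed.

Lemma config_eqmod L n r r' H : valid_gaps L n H -> r = r' %[mod L] ->
  config n r H = config n r' H.
Proof. by case=> _ sH rr'; rewrite /config /crot sH rr'. Qed.

Lemma reach_shift1_canonical_single L (e : rel (seq letter)) N :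
  (forall a b, Omega L 1 a -> step 1 a b -> e a b) -> 1 < L ->
  valid_gaps L 1 (canonical 1 N) -> reach_shift L 1 e 1 (canonical 1 N) (canonical 1 N).
Proof.
move=> step_e L1 vC; have [_ sX] := vC; rewrite size_word_canonical // in sX.
have N0 : 0 < N by lia.
set C := nseq N.-1 0.
have eX : word_of 1 (canonical 1 N) = (bul 0 :: map box C) ++ [:: box 0].
  rewrite /word_of /= /block /canonical /= cats0 /C -{1}(prednK N0) -rcons_nseq.
  by rewrite map_rcons -cats1.
have sC : size (bul 0 :: map box C) = N by rewrite /= size_map size_nseq prednK.
have := reach_shift_step step_e (ltnSn 0) (a := N) (a' := 0) vC vC.
have NL : N %% L = N by rewrite modn_small; lia.
rewrite add0n NL -sX addnK; apply.
rewrite /crot eX mod0n rot0.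
have -> : N %% size ((bul 0 :: map box C) ++ [:: box 0]) = size (bul 0 :: map box C).
  by rewrite size_cat sC modn_small // addn1.
rewrite rot_size_cat.
by exists 0 => //; exists 0; apply: Or33; apply: T4_at0_single.
Qed.

Section Irreducibility.
Variables (L n : nat) (e : rel (seq letter)).
Hypothesis step_e : forall a b, Omega L n a -> step n a b -> e a b.
Hypothesis n_gt0 : 0 < n.
Hypothesis n_lt_L : n < L.
Let L_gt0 : 0 < L := ltn_trans n_gt0 n_lt_L.

Local Notation reach := (reach L n e).
Local Notation reach_shift := (reach_shift L n e).
Local Notation linked := (linked L n e).

Lemma linked_to_canonical H : valid_gaps L n H -> exists N, linked H (canonical n N).
Proof.
move=> vH; case: (ltnP 1 n) => n1; first exact: linked_canonical.
have n1' : n = 1 by lia.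
exists (size (H 0)); apply: linked_eq (linked_refl e vH) _ => i.
rewrite inE n1' ltnS leqn0 => /eqP ->; rewrite /canonical /=.
case: vH => hl _; apply/all_pred1P; move: (hl 0 n_gt0); rewrite n1'.
by apply: sub_all => b; rewrite ltnS leqn0.
Qed.

Lemma reach_shift1_canonical N : valid_gaps L n (canonical n N) ->
  reach_shift 1 (canonical n N) (canonical n N).
Proof.
move=> vC; have NL : N = L - n by case: (vC) => _; rewrite size_word_canonical //; lia.
case: (ltnP 1 n) => n1.
  have pk : predl n n.-1 = n.-2 by rewrite predl_pred; lia.
  have hk : canonical n N (predl n n.-1) = rcons (nseq N.-1 n.-1) n.-1.
    by rewrite pk /canonical eqxx rcons_nseq prednK //; lia.
  have kn : n.-1 < n by lia.
  have c0 := cascade0 n1 kn hk.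
  have vc : valid_gaps L n (cascade n (canonical n N) n.-1 (nseq N.-1 n.-1) 0) by rewrite c0.
  have [_] := cascade_chain step_e n1 n vc.
  by rewrite add0n cascade_n c0 /cascade_shift pk sum_modn_eq0.
have n1' : n = 1 by lia.
by move: step_e n_lt_L vC; rewrite n1'; apply: reach_shift1_canonical_single.
Qed.

Lemma reach_canonical N r r' : valid_gaps L n (canonical n N) ->
  reach (config n r (canonical n N)) (config n r' (canonical n N)).
Proof.
move=> vC; have := reach_shiftM (r' + L - r %% L) (reach_shift1_canonical vC) r.
by rewrite muln1 (config_eqmod vC (addn_subn_modn _ _ L_gt0)).
Qed.

Lemma reach_Omega x y : Omega L n x -> Omega L n y -> reach x y.
Proof.
move=> Ox Oy.
have [r1 [H1 [v1 ->]]] := Omega_config n_gt0 Ox.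
have [r2 [H2 [v2 ->]]] := Omega_config n_gt0 Oy.
have [N [_ vC [d1 h1] _]] := linked_to_canonical v1.
have [N2 [_ vC2 _ [d2 h2]]] := linked_to_canonical v2.
have eN : N2 = N.
  by case: vC vC2 => _ + [_]; rewrite !size_word_canonical //; lia.
rewrite eN in h2; set r := r2 + L - d2 %% L.
apply: reach_trans (h1 r1) (reach_trans (reach_canonical _ r vC) _).
by move: (h2 r); rewrite addnC (config_eqmod v2 (addn_subn_modn _ _ L_gt0)).
Qed.

End Irreducibility.

Theorem proposition4p1 (R : realFieldType) (L n : nat) (p q : nat -> R) :
  (1 <= L)%N -> (1 <= n)%N -> (n < L)%N ->
  (forall k, (k < n)%N -> (0 < p k)%R) ->
  (forall k, (k < n)%N -> (0 < q k)%R) ->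
  ctmc_irreducible L n p q.
Proof.
move=> _ n_gt0 n_lt_L hp hq.
apply: (@reach_Omega L n (fun a b => 0 < rate p q n a b)%R) => // a b Oa.
by apply: rate_gt0 => //; apply: Omega_size_gt0 n_gt0 Oa.
Qed.
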